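(* Let $G$ be an infinite group with a finite-index normal infinite cyclic subgroup $Z$, identified with $\mathbb{Z}$ via a generator, and let $\mu$ be a symmetric, finitely supported generating probability measure on $G$ with $S=\operatorname{supp}\mu$. Let $T\subset G$ be a finite set such that every $g\in G$ can be written uniquely as $g=\zeta(g)\tau(g)$ with $\zeta(g)\in Z\cong\mathbb{Z}$ and $\tau(g)\in T$. Let $M\in\mathbb{N}$ be such that $|\zeta(gs)-\zeta(g)|\le M$ for all $g\in G$, $s\in S$. Let $(X_t)$ be the random walk on $(G,\mu)$ and set $T^+_n=\min\{t\ge0:\zeta(X_t)\ge n\}$, $T^-_n=\min\{t\ge0:\zeta(X_t)\le n\}$. Then for $m\in\mathbb{Z}$, $R\in\mathbb{N}$ and $g\in G$ with $m<\zeta(g)<m+R$, \[\mathbb{P}_g\left[\,T^+_{m+R}<T^-_m\,\right]=\frac{\zeta(g)-m}{R+M}+O\!\left(\frac1R\right),\] where the implied constant does not depend on $m$, $R$ or $g$.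
   Context: $\mu$ is generating if the semigroup generated by $\operatorname{supp}\mu$ is $G$, symmetric if $\mu(g)=\mu(g^{-1})$. The random walk on $(G,\mu)$ started at $g$ has $X_0=g$ and $X_{n}=X_{n-1}s$ with probability $\mu(s)$ independently; $\mathbb{P}_g$ denotes its law. (Such an $M$ always exists, e.g. $M=\max\{|\zeta(ts)|:s\in S,t\in T\}$.) *)

From HB Require Import structures.
From mathcomp Require Import all_boot all_order all_algebra.
From mathcomp Require Import boolp classical_sets reals.
Set Implicit Arguments. Unset Strict Implicit. Unset Printing Implicit Defensive.
Import Order.TTheory GRing.Theory Num.Theory.
Local Open Scope ring_scope.

Definition is_group {G : Type} (mul : G -> G -> G) (one : G) (inv : G -> G) :=
  [/\ (forall a b c, mul a (mul b c) = mul (mul a b) c),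
      (forall a, mul one a = a) &
      (forall a, mul (inv a) a = one)].

Fixpoint gpow_nat {G : Type} (mul : G -> G -> G) (one : G) (z : G) (n : nat) : G :=
  match n with 0%N => one | k.+1 => mul z (gpow_nat mul one z k) end.

Definition gpow {G : Type} (mul : G -> G -> G) (one : G) (inv : G -> G)
  (z : G) (k : int) : G :=
  match k with
  | Posz n => gpow_nat mul one z n
  | Negz n => inv (gpow_nat mul one z n.+1)
  end.

(* all words of length n over the (duplicate-free) list S, i.e. S^n *)
Fixpoint words {G : Type} (S : seq G) (n : nat) : seq (seq G) :=
  match n with
  | 0%N => [:: [::]]
  | k.+1 => flatten [seq [seq s :: w | w <- words S k] | s <- S]
  end.

Definition walk_pos {G : Type} (mul : G -> G -> G) (g : G) (w : seq G) (t : nat) : G :=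
  foldl mul g (take t w).

(* P_g[ T^+_hi < T^-_lo and T^+_hi <= n ] for the random walk with step law mu
   supported on S: sum over all step sequences of length n of their probability
   times the indicator that some t <= n has zeta(X_t) >= hi while
   zeta(X_t') > lo for all t' <= t. *)
Definition exit_up_by {R : realType} {G : Type} (mul : G -> G -> G)
  (mu : G -> R) (S : seq G) (zeta : G -> int) (lo hi : int) (g : G) (n : nat) : R :=
  \sum_(w <- words S n)
     (\prod_(s <- w) mu s) *
     ([exists t : 'I_n.+1,
         (hi <= zeta (walk_pos mul g w t)) &&
         [forall t' : 'I_n.+1,
            (t' <= t)%N ==> (lo < zeta (walk_pos mul g w t'))]] : bool)%:R.

(* P_g[ T^+_hi < T^-_lo ] = sup_n P_g[ T^+_hi < T^-_lo, T^+_hi <= n ]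
   (continuity from below along the increasing events). *)
Definition exit_up_prob {R : realType} {G : Type} (mul : G -> G -> G)
  (mu : G -> R) (S : seq G) (zeta : G -> int) (lo hi : int) (g : G) : R :=
  sup (range (exit_up_by mul mu S zeta lo hi g)).

(* Right multiplication by a step permutes the finitely many cosets of <z>, so
   the coset of the walk is a doubly stochastic Markov chain, irreducible since
   mu generates G; by symmetry of mu, the mean increment of zeta averaged over
   the cosets vanishes.  Solving the Poisson equation for this mean increment on
   the finite chain yields a bounded phi such that h = zeta + phi is
   mu-harmonic.  Optional stopping for h at the exit time from the strip
   m < zeta < m + R, where h is within B of m or within M + B of m + R, gives
   P[exit up] = (zeta g - m) / (R + M) + O(1/R).  The exit time is almost
   surely finite: from each coset a fixed word of bounded length raises zeta by
   R, so the probability of staying in the strip decays geometrically. *)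

From Stdlib Require List.
From mathcomp Require Import all_boot all_order all_algebra.
From mathcomp Require Import boolp classical_sets reals zify ring lra.
Set Implicit Arguments. Unset Strict Implicit. Unset Printing Implicit Defensive.
Import Order.TTheory GRing.Theory Num.Theory.
Local Open Scope ring_scope.

Section GroupLaws.
Variables (G : Type) (mul : G -> G -> G) (one : G) (inv : G -> G).
Hypothesis grp : is_group mul one inv.

Lemma grp_mulA a b c : mul a (mul b c) = mul (mul a b) c.
Proof. by case: grp. Qed.

Lemma grp_mul1g a : mul one a = a.
Proof. by case: grp. Qed.

Lemma grp_mulVg a : mul (inv a) a = one.
Proof. by case: grp. Qed.

Lemma grp_mulKg a b : mul (inv a) (mul a b) = b.
Proof. by rewrite grp_mulA grp_mulVg grp_mul1g. Qed.

Lemma grp_mulgV a : mul a (inv a) = one.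
Proof.
have idem : mul (mul a (inv a)) (mul a (inv a)) = mul a (inv a).
  by rewrite -grp_mulA (grp_mulA (inv a)) grp_mulVg grp_mul1g.
by rewrite -[LHS](grp_mulKg (mul a (inv a))) idem grp_mulVg.
Qed.

Lemma grp_mulg1 a : mul a one = a.
Proof. by rewrite -(grp_mulVg a) grp_mulA grp_mulgV grp_mul1g. Qed.

Lemma grp_invK a : inv (inv a) = a.
Proof. by rewrite -[inv (inv a)]grp_mulg1 -(grp_mulVg a) grp_mulKg. Qed.

Lemma grp_mulKVg a b : mul a (mul (inv a) b) = b.
Proof. by rewrite -{1}(grp_invK a) grp_mulKg. Qed.

Lemma grp_mulgK a b : mul (mul a b) (inv b) = a.
Proof. by rewrite -grp_mulA grp_mulgV grp_mulg1. Qed.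

Lemma grp_invM a b : inv (mul a b) = mul (inv b) (inv a).
Proof.
have h : mul (mul (inv b) (inv a)) (mul a b) = one.
  by rewrite -grp_mulA grp_mulKg grp_mulVg.
by rewrite -[RHS]grp_mulg1 -(grp_mulgV (mul a b)) grp_mulA h grp_mul1g.
Qed.

Lemma foldl_grp_mul g w : foldl mul g w = mul g (foldl mul one w).
Proof.
elim: w g => [|s w IH] g /=; first by rewrite grp_mulg1.
by rewrite IH [in RHS]IH grp_mul1g grp_mulA.
Qed.

Local Notation gpow_nat := (gpow_nat mul one).
Local Notation gpow := (gpow mul one inv).

Lemma gpow_natSr x n : gpow_nat x n.+1 = mul (gpow_nat x n) x.
Proof.
elim: n => [|n IH] /=; first by rewrite grp_mul1g grp_mulg1.
by rewrite -grp_mulA -IH.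
Qed.

Lemma gpowS x k : gpow x (k + 1) = mul x (gpow x k).
Proof.
case: k => [n|[|n]]; first by rewrite -PoszD addn1.
  by rewrite /= grp_mulg1 grp_mulgV.
have -> : Negz n.+1 + 1 = Negz n by rewrite !NegzE; lia.
by rewrite /gpow [gpow_nat x n.+2]gpow_natSr grp_invM grp_mulKVg.
Qed.

Lemma gpowD x k l : gpow x (k + l) = mul (gpow x k) (gpow x l).
Proof.
have gpowB1 m : gpow x (m - 1) = mul (inv x) (gpow x m).
  by rewrite -{2}(subrK 1 m) gpowS grp_mulKg.
elim/int_rect: k => [|n IH|n IH]; first by rewrite add0r grp_mul1g.
  by rewrite -addn1 PoszD addrAC !gpowS IH grp_mulA.
by rewrite -addn1 PoszD opprD addrAC !gpowB1 IH grp_mulA.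
Qed.

End GroupLaws.

Section SumsOverLists.
Variables (R : realDomainType) (T : Type).
Implicit Types (l : seq T) (F : T -> R).

Lemma ler_sum_In l F F' :
  (forall s, List.In s l -> F s <= F' s) -> \sum_(s <- l) F s <= \sum_(s <- l) F' s.
Proof.
elim: l => [|a l IH] le_FF'; rewrite ?big_nil ?big_cons //.
by rewrite lerD ?le_FF' ?IH //= => [|? ?]; [left|apply: le_FF'; right].
Qed.

Lemma sumr_ge0_In l F : (forall s, List.In s l -> 0 <= F s) -> 0 <= \sum_(s <- l) F s.
Proof. by move/ler_sum_In; rewrite big1_eq. Qed.

Lemma ler_sum_term_In l F s :
  (forall s, List.In s l -> 0 <= F s) -> List.In s l -> F s <= \sum_(s' <- l) F s'.
Proof.
elim: l => [|a l IH] //= F_ge0 [<-|ls]; rewrite big_cons.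
  by rewrite lerDl sumr_ge0_In // => ? ?; apply: F_ge0; right.
by rewrite -[F s]add0r lerD ?IH ?F_ge0 //; [left | move=> ? ?; apply: F_ge0; right].
Qed.

Lemma exists_lb_In l F : (forall s, List.In s l -> 0 < F s) ->
  exists2 c, 0 < c <= 1 & forall s, List.In s l -> c <= F s.
Proof.
elim: l => [|a l IH] F_gt0; first by exists 1 => [|s []]; rewrite ltr01 lexx.
have [c /andP[c_gt0 c_le1] le_cF] := IH (fun s ls => F_gt0 s (or_intror ls)).
have Fa_gt0 := F_gt0 a (or_introl erefl).
exists (Num.min c (F a)); first by rewrite lt_min c_gt0 Fa_gt0 ge_min c_le1.
by move=> s /= [<-|ls]; rewrite ge_min ?lexx ?orbT ?le_cF.
Qed.

Lemma exprn_le_prod_In l F c : 0 <= c -> (forall s, List.In s l -> c <= F s) ->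
  c ^+ size l <= \prod_(s <- l) F s.
Proof.
move=> c_ge0; elim: l => [|a l IH] le_cF; rewrite ?big_nil ?big_cons ?expr0 //=.
rewrite exprS ler_pM ?exprn_ge0 ?le_cF ?IH //; first by left.
by move=> s ls; apply: le_cF; right.
Qed.

End SumsOverLists.

Lemma sup_range_bounds (R : realType) (f : nat -> R) (L U : R) n :
  (forall k, f k <= U) -> L <= f n -> L <= sup (range f) <= U.
Proof.
move=> f_le L_le; have f_ub : ubound (range f) U by move=> _ [k _ <-].
apply/andP; split; last by apply: ge_sup => //; exists (f 0%N), 0%N.
by apply: le_trans L_le _; apply: ub_le_sup; [exists U | exists n].
Qed.

Lemma dist_div_le (R : realFieldType) (p a D r C : R) :
  0 < r <= D -> a - C <= p * D <= a + C -> `|p - a / D| <= C / r.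
Proof.
move=> /andP[r_gt0 r_le_D] /andP[lb ub]; have D_gt0 := lt_le_trans r_gt0 r_le_D.
have C_ge0 : 0 <= C by lra.
have -> : p - a / D = (p * D - a) / D by field; rewrite lt0r_neq0.
rewrite normrM normfV (gtr0_norm D_gt0); apply: (@le_trans _ _ (C / D)).
  by rewrite ler_pM2r ?invr_gt0 // ler_norml; apply/andP; split; lra.
by rewrite ler_wpM2l ?lef_pV2 ?posrE.
Qed.

Lemma exprn_bernoulli_le1 (R : realDomainType) (q : R) n : 0 <= q <= 1 ->
  q ^+ n * (1 + n%:R * (1 - q)) <= 1.
Proof.
move=> /andP[q_ge0 q_le1]; elim: n => [|n IH]; first by rewrite expr0 mul0r addr0 mulr1.
have step : q * (1 + n.+1%:R * (1 - q)) <= 1 + n%:R * (1 - q).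
  rewrite -natr1; have n_ge0 : (0 : R) <= n%:R by apply: ler0n.
  have : 0 <= (1 + n%:R) * ((1 - q) * (1 - q)) by apply: mulr_ge0; nra.
  nra.
rewrite exprSr -mulrA; apply: le_trans IH.
by apply: ler_wpM2l => //; apply: exprn_ge0.
Qed.

Lemma exists_exprn_le (R : archiRealFieldType) (q eps : R) : 0 <= q < 1 -> 0 < eps ->
  exists n, q ^+ n <= eps.
Proof.
move=> /andP[q_ge0 q_lt1] eps_gt0.
have x_ge0 : 0 <= (eps * (1 - q))^-1 by rewrite invr_ge0 mulr_ge0 ?subr_ge0 ?ltW.
have := archi_boundP x_ge0; set n := Num.Def.archi_bound _ => n_gt; exists n.
have : 1 < eps * (n%:R * (1 - q)).
  by rewrite mulrCA -ltr_pdivrMr ?mul1r ?mulr_gt0 ?subr_gt0.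
have q01 : 0 <= q <= 1 by rewrite q_ge0 ltW.
have := exprn_bernoulli_le1 n q01.
have := exprn_ge0 n q_ge0.
have : 0 <= n%:R * (1 - q) by rewrite mulr_ge0 ?ler0n ?subr_ge0 ?ltW.
nra.
Qed.

Lemma sum_pred1_mul (R : pzSemiRingType) (I : finType) (i : I) (F : I -> R) :
  \sum_j (i == j)%:R * F j = F i.
Proof.
rewrite (bigD1 i) //= eqxx mul1r big1 ?addr0 // => j.
by rewrite eq_sym => /negPf ->; rewrite mul0r.
Qed.

Section DoublyStochastic.
Variables (R : realFieldType) (n : nat) (P : 'M[R]_n).
Hypothesis P_ge0 : forall i j, 0 <= P i j.
Hypothesis P_row1 : forall i, \sum_j P i j = 1.
Hypothesis P_col1 : forall j, \sum_i P i j = 1.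
Hypothesis P_irreducible : forall i j, connect [rel i j | 0 < P i j] i j.

Lemma harmonic_const (u : 'I_n -> R) :
  (forall i, u i = \sum_j P i j * u j) -> forall i j, u i = u j.
Proof.
move=> u_harm i j; have [k _ k_max] := @arg_maxP _ _ _ i xpredT u isT.
have u_max l : u l <= u k by apply: k_max.
have max_step x y : 0 < P x y -> u x = u k -> u y = u k.
  move=> Pxy_gt0 ux_max.
  have : \sum_j P x j * (u k - u j) = 0.
    under eq_bigr do rewrite mulrBr.
    by rewrite sumrB -big_distrl /= P_row1 mul1r -u_harm ux_max subrr.
  have terms_ge0 l : true -> 0 <= P x l * (u k - u l).
    by move=> _; rewrite mulr_ge0 ?subr_ge0 ?u_max.
  by move/(psumr_eq0P terms_ge0)/(_ y isT)/eqP; rewrite mulf_eq0 gt_eqF //= subr_eq0 => /eqP.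
have max_path x p : path [rel i j | 0 < P i j] x p -> u x = u k -> u (last x p) = u k.
  elim: p x => [|y p IH] x //= /andP[Pxy p_path] ux.
  exact: IH p_path (max_step x y Pxy ux).
suff u_k l : u l = u k by rewrite !u_k.
by have /connectP[p k_p ->] := P_irreducible k l; apply: max_path.
Qed.

Local Notation laplacian := (1%:M - P^T).

Lemma mulmx_laplacianE (x : 'rV[R]_n) i : (x *m laplacian) 0 i = x 0 i - \sum_j P i j * x 0 j.
Proof.
rewrite mulmxBr mulmx1 !mxE; congr (_ - _).
by apply: eq_bigr => j _; rewrite !mxE mulrC.
Qed.

Lemma kermx_laplacian_const : (kermx laplacian <= (const_mx 1 : 'rV[R]_n))%MS.
Proof.
apply/row_subP => k; set u := row k (kermx laplacian).
have u_harm i : u 0 i = \sum_j P i j * u 0 j.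
  by apply/eqP; rewrite -subr_eq0 -mulmx_laplacianE -row_mul mulmx_ker row0 mxE.
clearbody u; have -> : u = u 0 k *: const_mx 1.
  by apply/rowP => i; rewrite !mxE mulr1 (harmonic_const u_harm i k).
exact: scalemx_sub (submx_refl _).
Qed.

Lemma poisson_solvable (d : 'I_n -> R) : \sum_i d i = 0 ->
  exists x : 'I_n -> R, forall i, d i = x i - \sum_j P i j * x j.
Proof.
(* The image of the laplacian has codimension at most one and lies in the
   hyperplane of zero-sum vectors, so it is that hyperplane. *)
move=> d_sum0; pose ones : 'cV[R]_n := const_mx 1.
have rank_laplacian : (n - 1 <= \rank laplacian)%N.
  have := leq_trans (mxrankS kermx_laplacian_const) (rank_leq_row _).
  rewrite mxrank_ker; have := rank_leq_col laplacian; lia.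
have laplacian_ones : (laplacian <= kermx ones)%MS.
  apply/sub_kermxP/colP => i; rewrite !mxE.
  under eq_bigr do rewrite !mxE mulr1 -[(i == _)%:R]mulr1.
  by rewrite sumrB P_col1 sum_pred1_mul subrr.
have rank_ker_ones : (\rank (kermx ones) <= \rank laplacian)%N.
  rewrite mxrank_ker; have [n0|n_gt0] := posnP n; first lia.
  suff : (0 < \rank ones)%N by lia.
  rewrite lt0n mxrank_eq0; apply/eqP => /colP/(_ (Ordinal n_gt0)).
  by rewrite !mxE; apply/eqP/oner_neq0.
have ker_ones_laplacian : (kermx ones <= laplacian)%MS.
  by rewrite -(mxrank_leqif_sup laplacian_ones).2 eqn_leq rank_ker_ones mxrankS.
have /submxP[x d_xlap] : ((\row_i d i) <= laplacian)%MS.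
  apply: submx_trans ker_ones_laplacian; apply/sub_kermxP/rowP => k.
  by rewrite ord1 !mxE -[RHS]d_sum0; apply: eq_bigr => i _; rewrite !mxE mulr1.
exists (x 0) => i; have := congr1 (fun v : 'rV_n => v 0 i) d_xlap.
by rewrite mxE mulmx_laplacianE.
Qed.

End DoublyStochastic.

Lemma InP (T : eqType) (x : T) (s : seq T) : reflect (List.In x s) (x \in s).
Proof.
elim: s => [|y s IH] /=; first by constructor.
by rewrite in_cons; apply: (iffP orP) => [[/eqP->|/IH]|[->|/IH]]; [left|right|left|right].
Qed.

Lemma NoDup_uniq (T : eqType) (s : seq T) : List.NoDup s -> uniq s.
Proof. by elim=> //= x {}s x_notin _ ->; rewrite andbT; apply/negP => /InP. Qed.

Section CosetWalk.
Variables (G : Type) (mul : G -> G -> G) (one : G) (inv : G -> G).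
Hypothesis grp : is_group mul one inv.
Variables (z : G) (T : seq G) (zeta : G -> int) (tau : G -> G).
Local Notation zpow := (gpow mul one inv z).
Hypothesis Hdec : forall g, g = mul (zpow (zeta g)) (tau g) /\ List.In (tau g) T.
Hypothesis Hdec_uniq : forall g (k : int) t, List.In t T ->
  g = mul (zpow k) t -> k = zeta g /\ t = tau g.

Lemma tau_In g : List.In (tau g) T.
Proof. by case: (Hdec g). Qed.

Lemma dec_zpow_mul k g : zeta (mul (zpow k) g) = k + zeta g /\ tau (mul (zpow k) g) = tau g.
Proof.
have := @Hdec_uniq (mul (zpow k) g) (k + zeta g) (tau g) (tau_In g).
by rewrite (gpowD grp) -(grp_mulA grp) -(proj1 (Hdec g)) => /(_ erefl) [<- <-].
Qed.

Lemma dec_mul g s : zeta (mul g s) = zeta g + zeta (mul (tau g) s)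
  /\ tau (mul g s) = tau (mul (tau g) s).
Proof.
have -> : mul g s = mul (zpow (zeta g)) (mul (tau g) s).
  by rewrite (grp_mulA grp) -(proj1 (Hdec g)).
exact: dec_zpow_mul.
Qed.

Lemma dec_In t : List.In t T -> zeta t = 0 /\ tau t = t.
Proof. by move=> tT; have [<- <-] := @Hdec_uniq t 0 t tT (esym (grp_mul1g grp t)). Qed.

Definition reps : seq {classic G} := undup (T : seq {classic G}).
Definition ncosets := size reps.

Lemma index_tau_lt g : (index (tau g : {classic G}) reps < ncosets)%N.
Proof. by rewrite index_mem mem_undup; apply/(@InP {classic G})/tau_In. Qed.

Definition coset g : 'I_ncosets := Ordinal (index_tau_lt g).
Definition rep (i : 'I_ncosets) : G := nth (one : {classic G}) reps i.

Lemma rep_In i : List.In (rep i) T.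
Proof. by apply/(@InP {classic G}); rewrite -mem_undup mem_nth. Qed.

Lemma zeta_rep i : zeta (rep i) = 0.
Proof. exact: (dec_In (rep_In i)).1. Qed.

Lemma rep_coset g : rep (coset g) = tau g.
Proof. by rewrite /rep /= nth_index // mem_undup; apply/(@InP {classic G})/tau_In. Qed.

Lemma coset_rep i : coset (rep i) = i.
Proof.
by apply: val_inj; rewrite /= (dec_In (rep_In i)).2 index_uniq ?undup_uniq.
Qed.

Lemma coset_mul g s : coset (mul g s) = coset (mul (rep (coset g)) s).
Proof. by apply: val_inj; rewrite /= rep_coset (dec_mul g s).2. Qed.

Lemma zeta_mul g s : zeta (mul g s) = zeta g + zeta (mul (rep (coset g)) s).
Proof. by rewrite rep_coset (dec_mul g s).1. Qed.

Lemma dec_rep g : g = mul (zpow (zeta g)) (rep (coset g)).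
Proof. by rewrite rep_coset -(proj1 (Hdec g)). Qed.

Lemma coset_mulK g s : coset (mul (rep (coset (mul g s))) (inv s)) = coset g.
Proof. by rewrite -coset_mul (grp_mulgK grp). Qed.


Variables (R : realFieldType) (mu : G -> R) (S : seq G).
Hypothesis HS_uniq : List.NoDup S.
Hypothesis Hmu_pos : forall s, List.In s S -> 0 < mu s.
Hypothesis Hmu_supp : forall g, ~ List.In g S -> mu g = 0.
Hypothesis Hmu_sum : \sum_(s <- S) mu s = 1.
Hypothesis Hmu_sym : forall g, mu (inv g) = mu g.
Hypothesis Hmu_gen : forall g, exists w : seq G,
  w <> [::] /\ (forall s, List.In s w -> List.In s S) /\ g = foldl mul one w.

Definition coset_chain : 'M[R]_ncosets :=
  \matrix_(i, j) \sum_(s <- S) (coset (mul (rep i) s) == j)%:R * mu s.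

Definition coset_drift (i : 'I_ncosets) : R := \sum_(s <- S) mu s * (zeta (mul (rep i) s))%:~R.

Lemma coset_chain_ge0 i j : 0 <= coset_chain i j.
Proof. by rewrite mxE; apply: sumr_ge0_In => s /Hmu_pos/ltW; apply: mulr_ge0. Qed.

Lemma coset_chain_row1 i : \sum_j coset_chain i j = 1.
Proof.
under eq_bigr do rewrite mxE.
by rewrite exchange_big -[RHS]Hmu_sum; apply: eq_bigr => s _; rewrite sum_pred1_mul.
Qed.

Lemma coset_chain_col1 j : \sum_i coset_chain i j = 1.
Proof.
under eq_bigr do rewrite mxE.
rewrite exchange_big -[RHS]Hmu_sum; apply: eq_bigr => s _ /=.
rewrite -big_distrl /= -[RHS]mul1r; congr (_ * _).
rewrite -[RHS](sum_pred1_mul (coset (mul (rep j) (inv s))) (fun _ => 1)).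
apply: eq_bigr => i _; rewrite mulr1.
suff -> : (coset (mul (rep i) s) == j) = (coset (mul (rep j) (inv s)) == i) by [].
apply/eqP/eqP => [<-|<-]; first by rewrite coset_mulK // coset_rep.
by rewrite -[s in mul _ s](grp_invK grp) coset_mulK // coset_rep.
Qed.

Lemma coset_chain_ge_mu i s : List.In s S -> mu s <= coset_chain i (coset (mul (rep i) s)).
Proof.
move=> sS; rewrite mxE.
pose F s' := (coset (mul (rep i) s') == coset (mul (rep i) s))%:R * mu s'.
have := ler_sum_term_In (F := F) _ sS; rewrite /F eqxx mul1r; apply=> s' /Hmu_pos/ltW.
exact: mulr_ge0.
Qed.

Lemma coset_chain_connect g w : (forall s, List.In s w -> List.In s S) ->
  connect [rel i j | 0 < coset_chain i j] (coset g) (coset (foldl mul g w)).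
Proof.
elim: w g => [|s w IH] g wS /=; first exact: connect0.
apply: connect_trans (IH _ (fun s' ws' => wS s' (or_intror ws'))).
apply: connect1; rewrite /= coset_mul.
have sS := wS s (or_introl erefl).
exact: lt_le_trans (Hmu_pos sS) (coset_chain_ge_mu _ sS).
Qed.

Lemma coset_chain_irreducible i j : connect [rel i j | 0 < coset_chain i j] i j.
Proof.
have [w [_ [wS w_eq]]] := Hmu_gen (mul (inv (rep i)) (rep j)).
have := coset_chain_connect (rep i) wS.
by rewrite (foldl_grp_mul grp) -w_eq (grp_mulKVg grp) !coset_rep.
Qed.

Lemma inv_In s : List.In s S -> List.In (inv s) S.
Proof.
move=> sS; apply: contrapT => /Hmu_supp; rewrite Hmu_sym => mu0.
by have := Hmu_pos sS; rewrite mu0 ltxx.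
Qed.

Lemma perm_inv_S : perm_eq (map inv S : seq {classic G}) S.
Proof.
have S_uniq : uniq (S : seq {classic G}) by apply: NoDup_uniq.
have inv_inj : injective (inv : {classic G} -> {classic G}) := can_inj (grp_invK grp).
apply: uniq_perm; rewrite ?(map_inj_uniq inv_inj) // => x.
apply/(@mapP {classic G} {classic G})/idP => [[y /InP yS ->]|/InP xS]; first exact/InP/inv_In.
by exists (inv x); [apply/InP/inv_In | rewrite (grp_invK grp)].
Qed.

Lemma big_S_inv (F : G -> R) : \sum_(s <- S) F (inv s) = \sum_(s <- S) F s.
Proof.
by rewrite -(big_map inv xpredT) (perm_big (S : seq {classic G}) perm_inv_S).
Qed.

Lemma zeta_mul_inv g s :
  zeta (mul (rep (coset (mul g s))) (inv s)) = zeta g - zeta (mul g s).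
Proof. by have := zeta_mul (mul g s) (inv s); rewrite (grp_mulgK grp); lia. Qed.

Lemma coset_drift_sum0 : \sum_i coset_drift i = 0.
Proof.
pose D s := \sum_i (zeta (mul (rep i) s))%:~R : R.
have D_inv s : D (inv s) = - D s.
  have coset_inv_mulK :
      cancel (fun i => coset (mul (rep i) s)) (fun i => coset (mul (rep i) (inv s))).
    by move=> i; rewrite coset_mulK // coset_rep.
  rewrite /D (reindex_inj (can_inj coset_inv_mulK)) -sumrN; apply: eq_bigr => i _.
  by rewrite zeta_mul_inv zeta_rep -intrN; congr _%:~R; lia.
have sumD_opp : \sum_(s <- S) mu s * D s = - \sum_(s <- S) mu s * D s.
  by rewrite -[LHS]big_S_inv -sumrN; apply: eq_bigr => s _; rewrite Hmu_sym D_inv mulrN.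
rewrite /coset_drift exchange_big /=; transitivity (\sum_(s <- S) mu s * D s); last lra.
by apply: eq_bigr => s _; rewrite big_distrr.
Qed.

Lemma coset_chain_mulr (x : 'I_ncosets -> R) i :
  \sum_j coset_chain i j * x j = \sum_(s <- S) mu s * x (coset (mul (rep i) s)).
Proof.
under eq_bigr do rewrite mxE big_distrl.
rewrite exchange_big; apply: eq_bigr => s _ /=.
by under eq_bigr do rewrite -mulrA; rewrite sum_pred1_mul.
Qed.

Lemma harmonic_corrector : exists (phi : G -> R) (B : R), (forall g, `|phi g| <= B) /\
  forall g, \sum_(s <- S) mu s * ((zeta (mul g s))%:~R + phi (mul g s)) = (zeta g)%:~R + phi g.
Proof.
have [x drift_x] := poisson_solvable coset_chain_ge0 coset_chain_row1 coset_chain_col1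
  coset_chain_irreducible coset_drift_sum0.
exists (fun g => x (coset g)), (\sum_i `|x i|); split=> [g|g] /=.
  by rewrite (bigD1 (coset g)) //= lerDl sumr_ge0.
have := drift_x (coset g); rewrite coset_chain_mulr /coset_drift => drift_g.
under eq_bigr do rewrite zeta_mul coset_mul intrD -addrA mulrDr.
rewrite big_split /= -big_distrl /= Hmu_sum mul1r.
under eq_bigr do rewrite mulrDr.
rewrite big_split /=; lra.
Qed.

Lemma escape_words (n : int) : exists K, forall g, exists w : seq G,
  [/\ forall s, List.In s w -> List.In s S, (size w <= K)%N & zeta (foldl mul g w) = zeta g + n].
Proof.
have /choice[W W_spec] : forall i : 'I_ncosets, exists w : seq G,
    (forall s, List.In s w -> List.In s S) /\
    foldl mul one w = mul (inv (rep i)) (mul (zpow n) (rep i)).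
  by move=> i; have [w [_ [wS w_eq]]] := Hmu_gen (mul (inv (rep i)) (mul (zpow n) (rep i)));
    exists w.
exists (\max_i size (W i)) => g; have [WS W_eq] := W_spec (coset g).
exists (W (coset g)); split=> //; first exact: leq_bigmax.
rewrite (foldl_grp_mul grp) W_eq {1}(dec_rep g) -(grp_mulA grp) (grp_mulKVg grp).
by rewrite (grp_mulA grp) -(gpowD grp) (dec_zpow_mul _ _).1 zeta_rep addr0.
Qed.

End CosetWalk.

Section ExitProbability.
Variables (R : realType) (G : Type) (mul : G -> G -> G) (mu : G -> R) (S : seq G).
Variables (zeta : G -> int) (M : nat).
Hypothesis Hmu_pos : forall s, List.In s S -> 0 < mu s.
Hypothesis Hmu_sum : \sum_(s <- S) mu s = 1.
Hypothesis HM : forall g s, List.In s S -> `|zeta (mul g s) - zeta g| <= M%:Z.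
Variables (lo : int) (Rn : nat).
Local Notation hi := (lo + Rn%:Z).

Definition in_strip g := (lo < zeta g) && (zeta g < hi).

Fixpoint exit_up n g : R :=
  if zeta g <= lo then 0 else if hi <= zeta g then 1 else
  if n is n'.+1 then \sum_(s <- S) mu s * exit_up n' (mul g s) else 0.

Fixpoint stay n g : R :=
  if in_strip g then
    if n is n'.+1 then \sum_(s <- S) mu s * stay n' (mul g s) else 1
  else 0.

Lemma mu_ge0 s : List.In s S -> 0 <= mu s.
Proof. by move/Hmu_pos/ltW. Qed.

Lemma mu_le1 s : List.In s S -> mu s <= 1.
Proof. by rewrite -Hmu_sum; apply: ler_sum_term_In mu_ge0. Qed.

Lemma sum_mu_le (F F' : G -> R) : (forall s, List.In s S -> F s <= F' s) ->
  \sum_(s <- S) mu s * F s <= \sum_(s <- S) mu s * F' s.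
Proof. by move=> le_FF'; apply: ler_sum_In => s sS; rewrite ler_wpM2l ?mu_ge0 ?le_FF'. Qed.

Lemma stay_out n g : ~~ in_strip g -> stay n g = 0.
Proof. by case: n => [|n] /= /negPf ->. Qed.

Lemma stay_ge0 n g : 0 <= stay n g.
Proof.
elim: n g => [|n IH] g /=; case: ifP => // _.
by apply: sumr_ge0_In => s sS; rewrite mulr_ge0 ?mu_ge0.
Qed.

Lemma stay_le1 n g : stay n g <= 1.
Proof.
elim: n g => [|n IH] g /=; case: ifP => // _.
apply: le_trans (sum_mu_le (F' := fun=> 1) _) _ => [s _|]; first exact: IH.
by under eq_bigr do rewrite mulr1; rewrite Hmu_sum.
Qed.

Lemma stay_addn_le q k n g : (forall g, stay k g <= q) -> stay (n + k) g <= q * stay n g.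
Proof.
move=> stay_k; elim: n g => [|n IH] g /=.
  by case: (boolP (in_strip g)) => [_|/stay_out ->]; rewrite ?mulr1 ?mulr0.
case: ifP => _; last by rewrite mulr0.
apply: le_trans (sum_mu_le (F' := fun s => q * stay n (mul g s)) _) _ => [s _|]; first exact: IH.
by rewrite big_distrr le_eqVlt; apply/orP; left; apply/eqP/eq_bigr => s _; rewrite mulrCA.
Qed.

Lemma stay_geometric q k j g : 0 <= q -> (forall g, stay k g <= q) -> stay (j * k) g <= q ^+ j.
Proof.
move=> q_ge0 stay_k; elim: j g => [|j IH] g; first by rewrite mul0n expr0 stay_le1.
rewrite mulSnr exprSr mulrC; apply: le_trans (stay_addn_le _ _ stay_k) _.
by rewrite ler_wpM2l ?IH.
Qed.

Lemma stay_step n g s : List.In s S -> mu s * (1 - stay n (mul g s)) <= 1 - stay n.+1 g.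
Proof.
move=> sS; rewrite /=; case: ifP => _; last first.
  by rewrite subr0 mulr_ile1 ?mu_ge0 ?mu_le1 // ?subr_ge0 ?stay_le1 // lerBlDr lerDl stay_ge0.
have -> : 1 - \sum_(t <- S) mu t * stay n (mul g t) = \sum_(t <- S) mu t * (1 - stay n (mul g t)).
  by rewrite -[1 in LHS]Hmu_sum -sumrB; apply: eq_bigr => t _; rewrite mulrBr mulr1.
apply: (ler_sum_term_In _ sS) => t tS.
by rewrite mulr_ge0 ?mu_ge0 ?subr_ge0 ?stay_le1.
Qed.

Lemma stay_escape K g w : (forall s, List.In s w -> List.In s S) ->
  (size w <= K)%N -> ~~ in_strip (foldl mul g w) -> \prod_(s <- w) mu s <= 1 - stay K g.
Proof.
elim: w g K => [|s w IH] g K wS /=.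
  by move=> _ /stay_out ->; rewrite big_nil subr0.
case: K => // K /[!ltnS] size_w out; rewrite big_cons.
have sS : List.In s S by apply: wS; left.
apply: le_trans (stay_step _ _ sS); rewrite ler_wpM2l ?mu_ge0 // IH //.
by move=> t wt; apply: wS; right.
Qed.

Lemma big_words_succ (F : seq G -> R) n :
  \sum_(w <- words S n.+1) F w = \sum_(s <- S) \sum_(w <- words S n) F (s :: w).
Proof. by rewrite /= big_flatten big_map; apply: eq_bigr => s _; rewrite big_map. Qed.

Lemma words_prod_sum1 n : \sum_(w <- words S n) \prod_(s <- w) mu s = 1.
Proof.
elim: n => [|n IH]; first by rewrite big_seq1 big_nil.
rewrite big_words_succ -[RHS]Hmu_sum; apply: eq_bigr => s _.
by under eq_bigr do rewrite big_cons; rewrite -big_distrr /= IH mulr1.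
Qed.

Definition exit_event n g w : bool :=
  [exists t : 'I_n.+1, (hi <= zeta (walk_pos mul g w t)) &&
     [forall t' : 'I_n.+1, (t' <= t)%N ==> (lo < zeta (walk_pos mul g w t'))]].

Lemma exit_eventP n g w : reflect
  (exists2 t, (t <= n)%N & hi <= zeta (walk_pos mul g w t) /\
     forall t', (t' <= t)%N -> lo < zeta (walk_pos mul g w t'))
  (exit_event n g w).
Proof.
apply: (iffP existsP) => [[t /andP[hi_t /forallP lo_t]]|[t t_le [hi_t lo_t]]].
  exists t; first by rewrite -ltnS.
  split=> // t' t'_le; have t'_lt : (t' < n.+1)%N by apply: leq_ltn_trans t'_le _.
  by have /implyP := lo_t (Ordinal t'_lt); apply.
exists (Ordinal (t_le : (t < n.+1)%N)); rewrite hi_t; apply/forallP => t'.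
by apply/implyP; apply: lo_t.
Qed.

Lemma walk_pos0 g w : walk_pos mul g w 0 = g.
Proof. by rewrite /walk_pos take0. Qed.

Lemma exit_event0 g w : exit_event 0 g w = (lo < zeta g) && (hi <= zeta g).
Proof.
apply/exit_eventP/andP => [[t t_le [hi_t lo_t]]|[lo_g hi_g]].
  move: t_le hi_t lo_t; rewrite leqn0 => /eqP -> hi_g lo_g.
  by have := lo_g 0%N (leqnn 0); rewrite walk_pos0 in hi_g *.
by exists 0%N; rewrite // walk_pos0; split=> // t'; rewrite leqn0 => /eqP ->; rewrite walk_pos0.
Qed.

Lemma exit_eventS n g s w : exit_event n.+1 g (s :: w) =
  (lo < zeta g) && ((hi <= zeta g) || exit_event n (mul g s) w).
Proof.
apply/exit_eventP/andP => [[[|t] t_le [hi_t lo_t]]|[lo_g /orP[hi_g|/exit_eventP]]].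
- by have := lo_t 0%N (leqnn 0); rewrite walk_pos0 in hi_t * => ->; rewrite hi_t.
- have := lo_t 0%N isT; rewrite walk_pos0 => ->; split=> //; apply/orP; right.
  by apply/exit_eventP; exists t => //; split=> // t' t'_le; apply: (lo_t t'.+1).
- by exists 0%N; rewrite // walk_pos0; split=> // t'; rewrite leqn0 => /eqP ->; rewrite walk_pos0.
- move=> [t t_le [hi_t lo_t]]; exists t.+1 => //; split=> // -[|t'] //= t'_le.
  exact: lo_t.
Qed.

Lemma exit_up_by_exit_up n g : exit_up_by mul mu S zeta lo hi g n = exit_up n g.
Proof.
suff : \sum_(w <- words S n) (\prod_(s <- w) mu s) * (exit_event n g w)%:R = exit_up n g by [].
elim: n g => [|n IH] g.
  by rewrite big_seq1 big_nil mul1r exit_event0 /=; case: (leP (zeta g) lo) => //= _; case: ifP.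
rewrite big_words_succ /=; case: (leP (zeta g) lo) => [le_lo|lt_lo].
  by rewrite big1 // => s _; rewrite big1 // => w _; rewrite exit_eventS ltNge le_lo mulr0.
case: ifP => hi_g.
  rewrite -[RHS](words_prod_sum1 n.+1) big_words_succ; apply: eq_bigr => s _.
  by apply: eq_bigr => w _; rewrite exit_eventS lt_lo hi_g mulr1.
apply: eq_bigr => s _; rewrite -IH big_distrr; apply: eq_bigr => w _.
by rewrite exit_eventS lt_lo hi_g big_cons /= mulrA.
Qed.

Section Escape.
Variable K : nat.
Hypothesis escape : forall g, in_strip g -> exists w : seq G,
  [/\ forall s, List.In s w -> List.In s S, (size w <= K)%N & ~~ in_strip (foldl mul g w)].

Lemma stay_le_escape : exists2 q, 0 <= q < 1 & forall g, stay K g <= q.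
Proof.
have [c /andP[c_gt0 c_le1] le_c_mu] := exists_lb_In Hmu_pos.
have cK_gt0 : 0 < c ^+ K by rewrite exprn_gt0.
have cK_le1 : c ^+ K <= 1 := exprn_ile1 _ (ltW c_gt0) c_le1.
exists (1 - c ^+ K) => [|g]; first by apply/andP; split; lra.
case: (boolP (in_strip g)) => [/escape[w [wS size_w out]]|/stay_out ->]; last lra.
have := stay_escape wS size_w out.
have := exprn_le_prod_In (ltW c_gt0) (fun s ws => le_c_mu s (wS s ws)).
have : c ^+ K <= c ^+ size w by rewrite ler_wiXn2l // ltW.
lra.
Qed.

Lemma stay_vanishes eps : 0 < eps -> exists n, forall g, stay n g <= eps.
Proof.
move=> eps_gt0; have [q q01 stay_K] := stay_le_escape.
have [j qj_le] := exists_exprn_le q01 eps_gt0; have /andP[q_ge0 _] := q01.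
by exists (j * K)%N => g; apply: le_trans (stay_geometric _ _ q_ge0 stay_K) qj_le.
Qed.

End Escape.

Definition in_band g := (lo - M%:Z <= zeta g) && (zeta g <= hi + M%:Z).

Lemma in_band_mul g s : in_strip g -> List.In s S -> in_band (mul g s).
Proof.
move=> /andP[lo_g g_hi] /(HM g); rewrite ler_norml => /andP[? ?].
by apply/andP; split; lia.
Qed.

Lemma exit_up_out g : ~~ in_strip g ->
  (forall n, exit_up n g = 0) /\ (zeta g)%:~R <= lo%:~R :> R \/
  (forall n, exit_up n g = 1) /\ lo%:~R + Rn%:R <= (zeta g)%:~R :> R.
Proof.
rewrite /in_strip negb_and -!leNgt => /orP out_g.
have [le_lo|lt_lo] := leP (zeta g) lo.
  by left; split=> [[|n] /=|]; rewrite ?le_lo ?ler_int.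
have hi_g : hi <= zeta g by case: out_g => //; rewrite leNgt lt_lo.
right; split; first by case=> [|n] /=; rewrite leNgt lt_lo hi_g.
by move: hi_g; rewrite -(ler_int R) intrD.
Qed.

Lemma in_strip_real g : in_strip g ->
  lo%:~R < (zeta g)%:~R :> R /\ (zeta g)%:~R < lo%:~R + Rn%:R :> R.
Proof. by case/andP; rewrite -!(ltr_int R) intrD. Qed.

Lemma exit_up_in n g : in_strip g ->
  exit_up n g = if n is n'.+1 then \sum_(s <- S) mu s * exit_up n' (mul g s) else 0.
Proof. by case/andP=> lo_g g_hi; case: n => [|n] /=; rewrite leNgt lo_g /= leNgt g_hi. Qed.

Lemma sum_mu_affine a b c (F F' : G -> R) :
  \sum_(s <- S) mu s * (a + b * F s + c * F' s)
  = a + b * \sum_(s <- S) mu s * F s + c * \sum_(s <- S) mu s * F' s.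
Proof.
under eq_bigr do rewrite !mulrDr.
rewrite !big_split /= -big_distrl /= Hmu_sum mul1r !big_distrr /=.
by congr (_ + _ + _); apply: eq_bigr => s _; rewrite mulrCA.
Qed.

Section Harmonic.
Variables (phi : G -> R) (B : R).
Hypothesis phi_le : forall g, `|phi g| <= B.
Hypothesis harmonic : forall g,
  \sum_(s <- S) mu s * ((zeta (mul g s))%:~R + phi (mul g s)) = (zeta g)%:~R + phi g.
Local Notation h g := ((zeta g)%:~R + phi g%R).

Lemma zeta_phi_bounds g : (zeta g)%:~R - B <= h g <= (zeta g)%:~R + B.
Proof. by have := phi_le g; rewrite ler_norml => /andP[? ?]; apply/andP; split; lra. Qed.

Lemma in_band_real g : in_band g ->
  lo%:~R - M%:R <= (zeta g)%:~R :> R /\ (zeta g)%:~R <= lo%:~R + Rn%:R + M%:R :> R.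
Proof. by case/andP; rewrite -!(ler_int R) !intrD intrN => ? ?; split; lra. Qed.

Lemma exit_up_le_harmonic n g : in_band g ->
  lo%:~R - M%:R - B + (Rn + M)%:R * exit_up n g <= h g.
Proof.
rewrite natrD.
elim: n g => [|n IH] g band_g.
all: have /andP[h_lb h_ub] := zeta_phi_bounds g; have [band_lo band_hi] := in_band_real band_g.
all: case: (boolP (in_strip g)) => [strip_g|/exit_up_out[[-> ?]|[-> ?]]]; try lra.
  by have [lo_g _] := in_strip_real strip_g; rewrite exit_up_in //; lra.
rewrite exit_up_in // -harmonic.
set c := lo%:~R - M%:R - B; set D := Rn%:R + M%:R.
have -> : c + D * \sum_(s <- S) mu s * exit_up n (mul g s)
    = \sum_(s <- S) mu s * (c + D * exit_up n (mul g s) + 0 * 0).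
  by rewrite sum_mu_affine mul0r addr0.
apply: sum_mu_le => s sS; rewrite mul0r addr0.
exact: IH (in_band_mul strip_g sS).
Qed.

Lemma harmonic_le_exit_up n g : in_band g ->
  h g <= lo%:~R + B + (Rn + M)%:R * exit_up n g + (Rn%:R + 2 * B) * stay n g.
Proof.
rewrite natrD.
elim: n g => [|n IH] g band_g.
all: have /andP[h_lb h_ub] := zeta_phi_bounds g; have [band_lo band_hi] := in_band_real band_g.
all: case: (boolP (in_strip g)) => [strip_g|out_g].
all: try by rewrite stay_out //; case: (exit_up_out out_g) => [[-> ?]|[-> ?]]; lra.
  by have [_ g_hi] := in_strip_real strip_g; rewrite exit_up_in //= strip_g; lra.
rewrite exit_up_in // /= strip_g -harmonic -sum_mu_affine.
by apply: sum_mu_le => s sS; apply: IH (in_band_mul strip_g sS).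
Qed.

Lemma exit_up_prob_near K g :
  (forall g, in_strip g -> exists w : seq G,
    [/\ forall s, List.In s w -> List.In s S, (size w <= K)%N & ~~ in_strip (foldl mul g w)]) ->
  in_strip g ->
  `|exit_up_prob mul mu S zeta lo hi g - (zeta g - lo)%:~R / (Rn + M)%:R|
    <= (M%:R + 2 * B + 1) / Rn%:R.
Proof.
move=> escape strip_g; have [lo_g g_hi] := in_strip_real strip_g.
have band_g : in_band g by case/andP: strip_g => ? ?; apply/andP; split; lia.
have /andP[h_lb h_ub] := zeta_phi_bounds g.
have B_ge0 : 0 <= B := le_trans (normr_ge0 _) (phi_le g).
have M_ge0 : 0 <= M%:R :> R := ler0n _ _.
have D_gt0 : 0 < (Rn + M)%:R :> R by rewrite natrD; lra.
have eps_gt0 : 0 < (Rn%:R + 2 * B)^-1 by rewrite invr_gt0; lra.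
have [n stay_n] := stay_vanishes escape eps_gt0.
have exitE : exit_up_by mul mu S zeta lo hi g = exit_up ^~ g.
  by apply/funext => k; apply: exit_up_by_exit_up.
have exit_le k :
    exit_up k g <= ((zeta g)%:~R - lo%:~R + M%:R + 2 * B) / (Rn + M)%:R.
  by rewrite ler_pdivlMr // mulrC; have := exit_up_le_harmonic k band_g; lra.
have exit_ge : ((zeta g)%:~R - lo%:~R - 2 * B - 1) / (Rn + M)%:R <= exit_up n g.
  have E_gt0 : 0 < Rn%:R + 2 * B by lra.
  have : (Rn%:R + 2 * B) * stay n g <= 1.
    by rewrite -[X in _ <= X](mulfV (lt0r_neq0 E_gt0)) ler_pM2l.
  rewrite ler_pdivrMr // mulrC; have := harmonic_le_exit_up n band_g; lra.
have /andP[p_ge p_le] := sup_range_bounds exit_le exit_ge.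
rewrite /exit_up_prob exitE intrB; apply: dist_div_le; first by rewrite natrD lerDl ler0n; lra.
by rewrite ler_pdivrMr // in p_ge; rewrite ler_pdivlMr // in p_le; apply/andP; split; lra.
Qed.

End Harmonic.
End ExitProbability.

Unset Implicit Arguments.
Set Strict Implicit.

Theorem lemma9p1 (R : realType) (G : Type)
  (mul : G -> G -> G) (one : G) (inv : G -> G)
  (Hgrp : is_group mul one inv)
  (Hinf : ~ exists l : seq G, forall g, List.In g l)
  (z : G)
  (Hz_inj : forall a b : int, gpow mul one inv z a = gpow mul one inv z b -> a = b)
  (Hz_normal : forall (g : G) (a : int), exists b : int,
      mul (mul g (gpow mul one inv z a)) (inv g) = gpow mul one inv z b)
  (mu : G -> R) (S : seq G)
  (HS_uniq : List.NoDup S)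
  (Hmu_pos : forall s, List.In s S -> 0 < mu s)
  (Hmu_supp : forall g, ~ List.In g S -> mu g = 0)
  (Hmu_sum : \sum_(s <- S) mu s = 1)
  (Hmu_sym : forall g, mu (inv g) = mu g)
  (Hmu_gen : forall g, exists w : seq G,
      w <> [::] /\ (forall s, List.In s w -> List.In s S) /\ g = foldl mul one w)
  (T : seq G) (zeta : G -> int) (tau : G -> G)
  (Hdec : forall g, g = mul (gpow mul one inv z (zeta g)) (tau g) /\ List.In (tau g) T)
  (Hdec_uniq : forall g (k : int) t, List.In t T ->
      g = mul (gpow mul one inv z k) t -> k = zeta g /\ t = tau g)
  (M : nat)
  (HM : forall g s, List.In s S -> (`|zeta (mul g s) - zeta g| <= M%:Z)%R) :
  exists C : R, forall (m : int) (Rn : nat) (g : G),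
    m < zeta g < m + Rn%:Z ->
    `| exit_up_prob mul mu S zeta m (m + Rn%:Z) g
       - (zeta g - m)%:~R / (Rn + M)%:R | <= C / Rn%:R.
Proof.
have [phi [B [phi_le harmonic]]] :=
  harmonic_corrector Hgrp Hdec Hdec_uniq HS_uniq Hmu_pos Hmu_supp Hmu_sum Hmu_sym Hmu_gen.
exists (M%:R + 2 * B + 1) => m Rn g strip_g.
have [K escape] := escape_words Hgrp Hdec Hdec_uniq Hmu_gen Rn%:Z.
apply: (exit_up_prob_near (K := K) Hmu_pos Hmu_sum HM phi_le harmonic _ strip_g).
move=> h /andP[lo_h _]; have [w [wS size_w zeta_w]] := escape h.
exists w; split=> //; apply/negP => /andP[_]; rewrite zeta_w; lia.
Qed.
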